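(* A finite nonempty semigroup $S$ has a left zero or a right zero if and only if $S$ is $K$-thin and its group completion $GS$ is trivial.
   Context: An element $z\in S$ is a left zero if $zx=z$ for all $x\in S$, and a right zero if $xz=z$ for all $x\in S$. The group completion $GS$ is the image of $S$ under the left adjoint of the forgetful functor from groups to semigroups. For a finite nonempty semigroup $S$, the minimal ideal $K(S)$ is the intersection of all nonempty two-sided ideals of $S$. A Rees matrix semigroup $\mathcal{M}(H;I,J;p)$, for sets $I,J$, a group $H$ and a function $p\colon J\times I\to H$, is the set $I\times H\times J$ with product $(i,h,j)(i',h',j')=(i,h\,p(j,i')\,h',j')$. It is known that $K(S)$ is always isomorphic to such a Rees matrix semigroup with $H$ a finite group and $p$ normalized (i.e. $p(j_0,i)=e_H$ and $p(j,i_0)=e_H$ for some fixed $i_0\in I$, $j_0\in J$ and all $i,j$). $S$ is called $K$-thin if $K(S)$ has such a normalized Rees matrix structure with $|I|=1$ or $|J|=1$; equivalently, $K(S)$ is left-simple or right-simple. *)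

From mathcomp Require Import all_boot all_fingroup.
Set Implicit Arguments. Unset Strict Implicit. Unset Printing Implicit Defensive.

(* A finite semigroup is given by a finType S with an associative binary
   operation op (associativity is a hypothesis of the main theorem). *)

Section SemigroupDefs.
Variables (S : finType) (op : S -> S -> S).

Definition is_left_zero (z : S) : Prop := forall x : S, op z x = z.
Definition is_right_zero (z : S) : Prop := forall x : S, op x z = z.

Definition ideal (A : {set S}) : bool :=
  (A != set0) && [forall a in A, forall x : S, (op x a \in A) && (op a x \in A)].

Definition minimal_ideal : {set S} := \bigcap_(A | ideal A) A.

Definition rees_mul (I J : finType) (H : finGroupType) (p : J -> I -> H)
  (x y : I * H * J) : I * H * J :=
  let: (i, h, j) := x in let: (i', h', j') := y in
  (i, (h * p j i' * h')%g, j').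

(* K(S) is isomorphic to a Rees matrix semigroup M(H; I, J; p), H a finite
   group and p normalized, via an injective homomorphism f with image K(S). *)
Definition K_rees_structure (I J : finType) (H : finGroupType)
  (p : J -> I -> H) (f : I * H * J -> S) : Prop :=
  (exists (i0 : I) (j0 : J),
     (forall i, p j0 i = 1%g) /\ (forall j, p j i0 = 1%g)) /\
  injective f /\
  (forall s : S, s \in minimal_ideal <-> exists x, f x = s) /\
  (forall x y, f (rees_mul p x y) = op (f x) (f y)).

Definition K_thin : Prop :=
  exists (I J : finType) (H : finGroupType) (p : J -> I -> H) (f : I * H * J -> S),
    K_rees_structure p f /\ (#|I| = 1 \/ #|J| = 1).

End SemigroupDefs.

(* Arbitrary (possibly infinite) groups, used to express the universal
   property of the group completion. *)
Record group := Group {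
  gcar :> Type;
  gmul : gcar -> gcar -> gcar;
  gone : gcar;
  ginv : gcar -> gcar;
  gmulA : forall x y z, gmul x (gmul y z) = gmul (gmul x y) z;
  gmul1 : forall x, gmul gone x = x;
  gmulV : forall x, gmul (ginv x) x = gone
}.

(* The group completion GS (image of S under the left adjoint of the forgetful
   functor Grp -> SGrp) is trivial iff, by the adjunction, every semigroup
   homomorphism from S to any group is trivial. *)
Definition group_completion_trivial (S : Type) (op : S -> S -> S) : Prop :=
  forall (G : group) (f : S -> G),
    (forall x y, f (op x y) = gmul (f x) (f y)) -> forall x, f x = gone G.

(* A left zero z makes K(S) the left-zero semigroup of all left zeros, a
   Rees matrix semigroup with |J| = 1 and trivial group; and any semigroup
   map into a group sends x to 1, since f z = f z * f x.  Conversely, if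
   K(S) = M(H; I, 1; p) with p normalized, then p = 1 and e = (i0, 1, j0) is
   a right identity of K(S), so s |-> (H-coordinate of e s) is a semigroup
   map S -> H.  When GS is trivial this map is trivial, and then e s = e for
   every s.  The case |I| = 1 is the same argument in the converse
   semigroup. *)

From Pilot Require Import Defs.
From mathcomp Require Import all_boot all_fingroup zmodp.

Set Implicit Arguments.
Unset Strict Implicit.
Unset Printing Implicit Defensive.

Definition converse {T : Type} (op : T -> T -> T) : T -> T -> T :=
  fun x y => op y x.

Definition fin_group (H : finGroupType) : Defs.group :=
  Defs.Group (@mulgA H) (@mul1g H) (@mulVg H).

Section GroupFacts.
Variable G : Defs.group.

Lemma gmulV_r (x : G) : gmul x (ginv x) = gone G.
Proof.
rewrite -[in LHS](gmul1 (gmul x (ginv x))) -(gmulV (ginv x)).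
by rewrite -gmulA (gmulA (ginv x)) gmulV gmul1.
Qed.

Lemma gmul1_r (x : G) : gmul x (gone G) = x.
Proof. by rewrite -(gmulV x) gmulA gmulV_r gmul1. Qed.

Lemma gmulI (x y z : G) : gmul x y = gmul x z -> y = z.
Proof. by move=> /(congr1 (gmul (ginv x))); rewrite !gmulA gmulV !gmul1. Qed.

Definition converse_group : Defs.group :=
  @Defs.Group G (converse (@gmul G)) (gone G) (@ginv G)
    (fun x y z => esym (gmulA z y x)) gmul1_r gmulV_r.

End GroupFacts.

Section MinimalIdeal.
Variables (S : finType) (op : S -> S -> S).

Lemma minimal_ideal_mulr s y :
  y \in minimal_ideal op -> op y s \in minimal_ideal op.
Proof.
move=> /bigcapP yK; apply/bigcapP => A /[dup] /yK yA /andP[_ /forallP].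
by move=> /(_ y); rewrite yA => /forallP /(_ s) /andP[].
Qed.

Lemma ideal_converse : ideal (converse op) =1 ideal op.
Proof.
move=> A; rewrite /ideal; congr (_ && _).
by apply: eq_forallb => a; congr (_ ==> _); apply: eq_forallb => x; rewrite andbC.
Qed.

Lemma minimal_ideal_converse : minimal_ideal (converse op) = minimal_ideal op.
Proof. exact: eq_bigl ideal_converse. Qed.

End MinimalIdeal.

Section Converse.
Variables (S : finType) (op : S -> S -> S).

Lemma converse_assoc : associative op -> associative (converse op).
Proof. by move=> opA x y z; rewrite /converse opA. Qed.

Lemma group_completion_trivial_converse :
  group_completion_trivial op -> group_completion_trivial (converse op).
Proof. by move=> triv G f fM; apply: (triv (converse_group G)) => x y; apply: fM. Qed.

(* Reversing the order of products in H is undone by inversion in H. *)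
Lemma K_rees_structure_converse (I J : finType) (H : finGroupType)
    (p : J -> I -> H) (f : I * H * J -> S) :
  K_rees_structure op p f ->
  K_rees_structure (converse op) (fun i j => (p j i)^-1)%g
    (fun x : J * H * I => f (x.2, x.1.2^-1, x.1.1)%g).
Proof.
move=> [[i0 [j0 [pj0 pi0]]] [f_inj [f_im fM]]]; split; last split; last split.
- by exists j0, i0; split=> [j|i]; rewrite ?pj0 ?pi0 invg1.
- by move=> [[j h] i] [[j' h'] i'] /f_inj [-> /invg_inj -> ->].
- move=> s; rewrite minimal_ideal_converse.
  split=> [/f_im [[[i h] j] <-] | [[[j h] i] <-]]; last by apply/f_im; eexists.
  by exists (j, h^-1, i)%g; rewrite /= invgK.
- move=> [[j h] i] [[j' h'] i']; rewrite /converse -fM /=.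
  by rewrite !invMg invgK mulgA.
Qed.

Lemma K_thin_converse : K_thin op -> K_thin (converse op).
Proof.
move=> [I [J [H [p [f [KR cIJ]]]]]].
by do 5 eexists; split; [exact: K_rees_structure_converse KR | case: cIJ; auto].
Qed.

End Converse.

Section LeftZero.
Variables (S : finType) (op : S -> S -> S) (opA : associative op).
Variables (z : S) (z_left_zero : is_left_zero op z).

Lemma mem_minimal_ideal_left_zero s :
  s \in minimal_ideal op <-> is_left_zero op s.
Proof.
split=> [/bigcapP sK x | s_left_zero].
- pose L := [set s | [forall x, op s x == s]].
  suff /sK : ideal op L by rewrite inE => /forallP /(_ x) /eqP.
  apply/andP; split.
    by apply/set0Pn; exists z; rewrite inE; apply/forallP => y; rewrite z_left_zero.
  apply/forallP => a; apply/implyP; rewrite inE => /forallP aL.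
  apply/forallP => t; rewrite !inE; apply/andP; split; apply/forallP => y.
    by rewrite -opA (eqP (aL y)).
  by rewrite (eqP (aL t)) (eqP (aL y)).
- apply/bigcapP => A /andP[/set0Pn [a aA] /forallP /(_ a)].
  by rewrite aA => /forallP /(_ s) /andP[]; rewrite s_left_zero.
Qed.

Lemma K_thin_of_left_zero : K_thin op.
Proof.
pose I := {s : S | s \in minimal_ideal op}.
have zK : z \in minimal_ideal op by apply/mem_minimal_ideal_left_zero.
exists I, unit, ('I_1 : finGroupType), (fun _ _ => 1%g), (fun x => val x.1.1).
split; last by right; rewrite card_unit.
split; [by exists (exist _ z zK), tt | split; [|split]].
- move=> [[i h] []] [[i' h'] []] /= /val_inj ->.
  by rewrite (ord1 h) (ord1 h').
- move=> s; split=> [sK | [[[[s' s'K] h] j] /= <-] //].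
  by exists (exist _ s sK, 1%g, tt).
- move=> [[i h] j] [[i' h'] j'] /=.
  by have /mem_minimal_ideal_left_zero -> := valP i.
Qed.

Lemma group_completion_trivial_of_left_zero : group_completion_trivial op.
Proof.
move=> G f fM x; apply: (@gmulI G (f z)).
by rewrite -fM z_left_zero gmul1_r.
Qed.

End LeftZero.

Section SingleColumn.
Variables (S : finType) (op : S -> S -> S) (opA : associative op).
Variables (I J : finType) (H : finGroupType) (p : J -> I -> H).
Variables (f : I * H * J -> S) (i0 : I) (j0 : J).
Hypothesis f_inj : injective f.
Hypothesis f_im : forall s, s \in minimal_ideal op <-> exists x, f x = s.
Hypothesis fM : forall x y, f (rees_mul p x y) = op (f x) (f y).
Hypothesis J_single : forall j, j = j0.
Hypothesis p1 : forall j i, p j i = 1%g.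

Let e := f (i0, 1%g, j0).

Let coord (y : S) : I * H * J := odflt (i0, 1%g, j0) [pick x | f x == y].

Let coordK x : coord (f x) = x.
Proof. by rewrite /coord; case: pickP => [x' /eqP /f_inj -> // | /(_ x)]; rewrite eqxx. Qed.

Let coord_mem y : y \in minimal_ideal op -> f (coord y) = y.
Proof. by move=> /f_im [x <-]; rewrite coordK. Qed.

Let e_mem : e \in minimal_ideal op.
Proof. by apply/f_im; exists (i0, 1%g, j0). Qed.

Let eK s : op e s \in minimal_ideal op := minimal_ideal_mulr s e_mem.

Let mul_e_r y : y \in minimal_ideal op -> op y e = y.
Proof.
move=> /coord_mem <-; rewrite -fM; case: (coord y) => [[i h] j] /=.
by rewrite p1 !mulg1 (J_single j).
Qed.

Let psi (s : S) : H := (coord (op e s)).1.2.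

Let psiM s t : psi (op s t) = (psi s * psi t)%g.
Proof.
rewrite /psi; have -> : op e (op s t) = op (op e s) (op e t).
  by rewrite opA -[in LHS](mul_e_r (eK s)) !opA.
rewrite -[op e s]coord_mem // -[op e t]coord_mem // -fM !coordK.
case: (coord (op e s)) => [[i h] j]; case: (coord (op e t)) => [[i' h'] j'].
by rewrite /= p1 mulg1.
Qed.

Lemma left_zero_of_single_column :
  group_completion_trivial op -> is_left_zero op e.
Proof.
move=> triv s; have psi1 := triv (fin_group H) psi psiM s.
have ee : op e e = e by rewrite -fM /= p1 !mulg1.
rewrite -ee -opA -[op e s]coord_mem // -fM.
move: psi1; rewrite /psi; case: (coord _) => [[i h] j] /= ->.
by rewrite p1 !mulg1 (J_single j).
Qed.

End SingleColumn.

Lemma left_zero_of_K_rees_card_J1 (S : finType) (op : S -> S -> S)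
    (opA : associative op) (I J : finType) (H : finGroupType)
    (p : J -> I -> H) (f : I * H * J -> S) :
  K_rees_structure op p f -> #|J| = 1 -> group_completion_trivial op ->
  exists z, is_left_zero op z.
Proof.
move=> [[i0 [j0 [pj0 _]]] [f_inj [f_im fM]]] cJ triv.
have J_single j : j = j0 by have /card_le1_eqP := eq_leq cJ; apply.
have p1 j i : p j i = 1%g by rewrite (J_single j).
by eexists; apply: (left_zero_of_single_column opA i0 f_inj f_im fM J_single p1).
Qed.

Theorem proposition7p2 (S : finType) (op : S -> S -> S)
  (opA : associative op) (s0 : S) :
  ((exists z : S, is_left_zero op z) \/ (exists z : S, is_right_zero op z)) <->
  (K_thin op /\ group_completion_trivial op).
Proof.
have opA' := converse_assoc opA.
split=> [[[z zL] | [z zR]] | [[I [J [H [p [f [KR [cI | cJ]]]]]]] triv]].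
- split; [exact: (K_thin_of_left_zero opA zL)
         | exact: group_completion_trivial_of_left_zero zL].
- (* converse (converse op) is op only up to conversion, so op is given explicitly. *)
  split; [exact: (@K_thin_converse _ (converse op) (K_thin_of_left_zero opA' zR))
         | exact: (@group_completion_trivial_converse _ (converse op)
                    (group_completion_trivial_of_left_zero zR))].
- right; apply: (left_zero_of_K_rees_card_J1 opA' (K_rees_structure_converse KR) cI).
  exact: group_completion_trivial_converse.
- by left; apply: (left_zero_of_K_rees_card_J1 opA KR cJ).
Qed.
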